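(* There exist absolute constants $\eta,c,C',A_1,A_2>0$ such that the following holds. Let $k\ge 3$ and $n>\eta k$ be such that $M=\frac{3.5\,k\log k}{n}$ is an integer. Define $u_j=(-1)^{M+1}\frac{j!}{M!}\big(\frac kn\big)^j s(M+1,j+1)$ for $1\le j\le M$ and $u_j=0$ otherwise; equivalently $u_j=w_j\,j!\,(\frac{k}{nM})^j$ where $w\in\mathbb{R}^M$ is the unique vector with $\sum_{j=1}^Mw_jx^j=1$ for all $x\in\{1/M,2/M,\dots,1\}$. Let $\tilde C=\hat C_{\rm seen}+\sum_{j\ge1}u_j\Phi_j$ and $\hat C=\min\{\max\{\tilde C,\hat C_{\rm seen}\},k\}$. Then under the Poisson sampling model, for every urn of $k$ balls, $$\mathbb{E}(\hat C-C)^2\le ke^{-cn/k}+k^{-0.5-3.5\frac kn\log\frac{k}{en}}+R,$$ where $R=k\exp\big(\frac{k^2\log k}{n^2}e^{-cn/k}\big)$ if $n\le A_1k\log\log k$; $R=k\big(C'\frac kn\log\frac{k^2\log k}{n^2}\big)^{2n/k}$ if $A_1k\log\log k\le n\le A_2k\sqrt{\log k}$; and $R=0$ if $n\ge A_2k\sqrt{\log k}$.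
   Context: An urn contains $k$ colored balls; $k_i$ is the number of balls of color $i$ and $C$ the number of distinct colors. Poisson sampling model: $N\sim\mathrm{Poi}(n)$ balls are drawn uniformly at random with replacement, independently of $N$; equivalently the histograms $N_i$ are independent $\mathrm{Poi}(nk_i/k)$. Fingerprints $\Phi_j=\#\{i:N_i=j\}$; $\hat C_{\rm seen}=\sum_{j\ge1}\Phi_j$. Stirling numbers of the first kind $s(a,b)$ are defined by $x(x-1)\cdots(x-a+1)=\sum_{b}s(a,b)x^b$. Logarithms are natural. (The paper states the case distinctions with $\lesssim$ and exponents with $\Theta(\cdot)$; these are expressed here through absolute constants.) *)

From mathcomp Require ssreflect ssrfun ssrbool eqtype ssrnat seq choice fintype bigop ssralg ssrint poly.
Set Implicit Arguments.

Module Stir.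
  Import ssreflect ssrfun ssrbool eqtype ssrnat seq choice fintype bigop ssralg ssrint poly.
  Import GRing.Theory.
  Local Open Scope ring_scope.
  Definition stirling1 (a b : nat) : int :=
    (\prod_(i < a) ('X - ((i : nat)%:Z)%:P)) `_ b.
End Stir.

From Stdlib Require Import Arith Factorial Reals List Lra.
From Coquelicot Require Import Coquelicot.
Open Scope R_scope.

Definition int_to_R (z : ssrint.int) : R :=
  match z with
  | ssrint.Posz m => INR m
  | ssrint.Negz m => - INR (S m)
  end.

Definition stirling1R (a b : nat) : R := int_to_R (Stir.stirling1 a b).

Definition poisson_pmf (l : R) (m : nat) : R := exp (- l) * l ^ m / INR (fact m).

(* Expectation of f(N_1,...,N_C) when the N_i are independent Poisson(l_i),
   ls = [l_1; ...; l_C]: iterated (total) series over N_1, N_2, ... *)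
Fixpoint pois_expect (ls : list R) (f : list nat -> R) : R :=
  match ls with
  | nil => f nil
  | l :: ls' =>
      Series (fun m => poisson_pmf l m * pois_expect ls' (fun t => f (m :: t)))
  end.

Definition fingerprint (N : list nat) (j : nat) : nat :=
  length (filter (fun x => Nat.eqb x j) N).

Definition C_seen (N : list nat) : R :=
  INR (length (filter (fun x => negb (Nat.eqb x 0)) N)).

Definition ucoef (k : nat) (n : R) (M j : nat) : R :=
  if andb (Nat.leb 1 j) (Nat.leb j M) then
    (-1) ^ (M + 1) * (INR (fact j) / INR (fact M)) * (INR k / n) ^ j
      * stirling1R (M + 1) (j + 1)
  else 0.

(* C~ = C_seen + sum_{j>=1} u_j Phi_j ; since u_j = 0 for j > M the sum is
   over 1 <= j <= M *)
Definition C_tilde (k : nat) (n : R) (M : nat) (N : list nat) : R :=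
  C_seen N + fold_right Rplus 0
    (map (fun j => ucoef k n M j * INR (fingerprint N j)) (seq 1 M)).

Definition C_hat (k : nat) (n : R) (M : nat) (N : list nat) : R :=
  Rmin (Rmax (C_tilde k n M N) (C_seen N)) (INR k).

(* An urn of k balls: list of (positive) color multiplicities k_i summing to k *)
Definition is_urn (k : nat) (ks : list nat) : Prop :=
  List.Forall (fun x => (0 < x)%nat) ks /\ list_sum ks = k.

Definition rates (k : nat) (n : R) (ks : list nat) : list R :=
  map (fun ki => n * INR ki / INR k) ks.

Definition Rterm (c C' A1 A2 : R) (k : nat) (n : R) : R :=
  let kr := INR k in
  if Rle_dec n (A1 * kr * ln (ln kr)) then
    kr * exp (kr ^ 2 * ln kr / n ^ 2 * exp (- c * n / kr))
  else if Rle_dec n (A2 * kr * sqrt (ln kr)) then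
    kr * Rpower (C' * (kr / n) * ln (kr ^ 2 * ln kr / n ^ 2)) (2 * n / kr)
  else 0.

(* Write [g m = [m > 0] - 1 + u_m], so that [C_tilde - C = sum_i g (N_i)] over the colours, and
   clipping to [[C_seen, k]] only decreases the error since [C] lies in that interval. The [N_i] are
   independent Poisson, hence [E (sum_i g (N_i))^2 <= (sum_i E g (N_i))^2 + sum_i E g (N_i)^2].
   For a colour with [t] balls the falling-factorial identity of the Stirling numbers gives the
   bias [E g (N_i) = (-1)^(M+1) e^-l t(t-1)...(t-M) / (t M!)], which vanishes for [t <= M] and is
   at most [exp (-(n/k - 1)(M + 1))] otherwise. The second moment is [e^-l] plus terms
   [e^-l J! (t k/n)^J (|s(M+1,J+1)| / M!)^2]; these are controlled through the generating function
   [sum_J |s(M+1,J+1)| / M! w^J = prod_(i=1..M) (1 + w/i)], evaluated at [w = sqrt (J t k/n)].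
   The constants are [eta = 1000], [c = 1/10], [C' = 1], [A1 = 10], [A2 = 1]; with [n/k >= 1000]
   the remaining estimates are elementary inequalities on [exp] and [ln]. *)

From mathcomp Require ssreflect ssrfun ssrbool eqtype ssrnat seq choice fintype bigop ssralg ssrint poly.
From mathcomp Require ring.

(** * Signs of the Stirling numbers *)

Fixpoint stirling1u (a b : nat) : nat :=
  match a with
  | O => match b with O => 1%nat | S _ => 0%nat end
  | S a' =>
      ((match b with O => 0%nat | S b' => stirling1u a' b' end) + a' * stirling1u a' b)%nat
  end.

Module StirlingSign.
  Import ssreflect ssrfun ssrbool eqtype ssrnat seq choice fintype bigop ssralg ssrint poly ring.
  Import GRing.Theory.
  Local Open Scope ring_scope.

  Lemma stirling1E a b : Stir.stirling1 a b = (-1) ^+ (a + b) * (stirling1u a b)%:Z.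
  Proof.
    elim: a b => [|a IH] b.
      rewrite /Stir.stirling1 big_ord0 coefC; case: b => [|b] //=; by rewrite mulr0.
    rewrite /Stir.stirling1 big_ord_recr /= mulrBr coefB coefMX coefMC -!/(Stir.stirling1 a _).
    case: b => [|b] /=; rewrite ?plusE ?multE.
      rewrite IH !addn0 exprS PoszM; ring.
    rewrite !IH PoszD PoszM !addnS !addSn !exprS; ring.
  Qed.

  Lemma stirling1_odd a b :
    Stir.stirling1 a b = if odd (a + b) then - (stirling1u a b)%:Z else (stirling1u a b)%:Z.
  Proof.
    by rewrite stirling1E -signr_odd; case: (odd (a + b)); rewrite ?expr1 ?expr0 ?mulN1r ?mul1r.
  Qed.
End StirlingSign.

From Stdlib Require Import Factorial Reals Lra Lia List ZArith FunctionalExtensionality.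
From Coquelicot Require Import Coquelicot.
Open Scope R_scope.

Lemma pow_m1_odd e : (-1) ^ e = if ssrnat.odd e then -1 else 1.
Proof.
  induction e as [|e IH]; simpl; [reflexivity|].
  rewrite IH. destruct (ssrnat.odd e); simpl; ring.
Qed.

Lemma pow_m1_sq e : ((-1) ^ e) ^ 2 = 1.
Proof. rewrite <- pow_mult, Nat.mul_comm, pow_mult. replace ((-1) ^ 2) with 1 by ring. apply pow1. Qed.

Lemma stirling1R_sign a b : stirling1R a b = (-1) ^ (a + b) * INR (stirling1u a b).
Proof.
  unfold stirling1R. rewrite StirlingSign.stirling1_odd, pow_m1_odd.
  change (ssrnat.addn a b) with (a + b)%nat.
  destruct (ssrnat.odd (a + b)); simpl; [|ring].
  destruct (stirling1u a b); simpl; [ring|]. rewrite <- S_INR. ring.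
Qed.

Fixpoint sumR (f : nat -> R) (n : nat) : R :=
  match n with O => 0 | S n' => sumR f n' + f n' end.

Fixpoint prodR (f : nat -> R) (n : nat) : R :=
  match n with O => 1 | S n' => prodR f n' * f n' end.

Lemma sumR_ext f g n : (forall i, (i < n)%nat -> f i = g i) -> sumR f n = sumR g n.
Proof.
  induction n; simpl; intros H; [reflexivity|].
  rewrite IHn by (intros; apply H; lia). rewrite H by lia. reflexivity.
Qed.

Lemma sumR_shift f n : sumR f (S n) = f O + sumR (fun i => f (S i)) n.
Proof. induction n; simpl in *; [ring|]. rewrite IHn. ring. Qed.

Lemma sumR_plus f g n : sumR (fun i => f i + g i) n = sumR f n + sumR g n.
Proof. induction n; simpl; [ring|]. rewrite IHn; ring. Qed.

Lemma sumR_scal c f n : sumR (fun i => c * f i) n = c * sumR f n.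
Proof. induction n; simpl; [ring|]. rewrite IHn; ring. Qed.

Lemma sumR_const c n : sumR (fun _ => c) n = INR n * c.
Proof. induction n; simpl sumR; [simpl; ring|]. rewrite IHn, S_INR; ring. Qed.

Lemma sumR_le f g n : (forall i, (i < n)%nat -> f i <= g i) -> sumR f n <= sumR g n.
Proof.
  induction n; simpl; intros H; [lra|].
  assert (f n <= g n) by (apply H; lia).
  assert (sumR f n <= sumR g n) by (apply IHn; intros; apply H; lia). lra.
Qed.

Lemma sumR_nonneg f n : (forall i, (i < n)%nat -> 0 <= f i) -> 0 <= sumR f n.
Proof.
  intros H. replace 0 with (sumR (fun _ => 0) n) by (rewrite sumR_const; ring).
  apply sumR_le; auto.
Qed.

Lemma sumR_term_le f n i :
  (forall j, (j < n)%nat -> 0 <= f j) -> (i < n)%nat -> f i <= sumR f n.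
Proof.
  induction n; intros H Hi; [lia|]. simpl. destruct (Nat.eq_dec i n) as [->|].
  - assert (0 <= sumR f n) by (apply sumR_nonneg; intros; apply H; lia). lra.
  - assert (f i <= sumR f n) by (apply IHn; [intros; apply H; lia| lia]).
    assert (0 <= f n) by (apply H; lia). lra.
Qed.

Lemma prodR_ext f g n : (forall i, (i < n)%nat -> f i = g i) -> prodR f n = prodR g n.
Proof.
  induction n; simpl; intros H; [reflexivity|].
  rewrite IHn by (intros; apply H; lia). rewrite H by lia. reflexivity.
Qed.

Lemma prodR_shift f n : prodR f (S n) = f O * prodR (fun i => f (S i)) n.
Proof. induction n; simpl in *; [ring|]. rewrite IHn. ring. Qed.

Lemma prodR_eq0 f n i : (i < n)%nat -> f i = 0 -> prodR f n = 0.
Proof.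
  induction n; intros Hi H; [lia|]. simpl. destruct (Nat.eq_dec i n) as [->|].
  - rewrite H; ring.
  - rewrite IHn; [ring|lia|auto].
Qed.

Lemma prodR_nonneg f n : (forall i, (i < n)%nat -> 0 <= f i) -> 0 <= prodR f n.
Proof.
  induction n; simpl; intros H; [lra|].
  apply Rmult_le_pos; [apply IHn; intros|]; apply H; lia.
Qed.

Lemma prodR_le f g n : (forall i, (i < n)%nat -> 0 <= f i <= g i) -> prodR f n <= prodR g n.
Proof.
  induction n; simpl; intros H; [lra|].
  apply Rmult_le_compat; [apply prodR_nonneg; intros| | apply IHn; intros |]; apply H; lia.
Qed.

Lemma prodR_add f m n : prodR f (m + n) = prodR f m * prodR (fun i => f (m + i)%nat) n.
Proof.
  induction n; simpl; [rewrite Nat.add_0_r; ring|].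
  rewrite Nat.add_succ_r; simpl. rewrite IHn; ring.
Qed.

Lemma prodR_mult f g n : prodR (fun i => f i * g i) n = prodR f n * prodR g n.
Proof. induction n; simpl; [ring|]. rewrite IHn; ring. Qed.

Lemma prodR_const c n : prodR (fun _ => c) n = c ^ n.
Proof. induction n; simpl; [ring|]. rewrite IHn; ring. Qed.

Lemma prodR_neq0 f n : (forall i, (i < n)%nat -> f i <> 0) -> prodR f n <> 0.
Proof.
  induction n; simpl; intros H; [lra|].
  apply Rmult_integral_contrapositive; split; [apply IHn; intros|]; apply H; lia.
Qed.

Lemma prodR_inv f n : (forall i, (i < n)%nat -> f i <> 0) -> prodR (fun i => / f i) n = / prodR f n.
Proof.
  induction n; simpl; intros H; [field|].
  rewrite IHn by (intros; apply H; lia).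
  field; split; [apply H; lia| apply prodR_neq0; intros; apply H; lia].
Qed.

Lemma fact_prodR n : INR (fact n) = prodR (fun i => INR i + 1) n.
Proof. induction n; simpl prodR; [reflexivity|]. rewrite <- IHn, fact_simpl, mult_INR, S_INR. ring. Qed.

(** * Falling and rising factorials *)

Lemma stirling1u_gt a b : (a < b)%nat -> stirling1u a b = 0%nat.
Proof.
  revert b; induction a; intros b H; destruct b; simpl; try lia; auto.
  rewrite IHa, (IHa (S b)) by lia. lia.
Qed.

Lemma stirling1u_S0 a : stirling1u (S a) 0 = 0%nat.
Proof. induction a; simpl in *; [reflexivity|]. rewrite IHa. lia. Qed.

Lemma stirling1u_S1 a : stirling1u (S a) 1 = fact a.
Proof.
  induction a; [reflexivity|].
  change (stirling1u (S (S a)) 1) with (stirling1u (S a) 0 + S a * stirling1u (S a) 1)%nat.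
  rewrite stirling1u_S0, IHa. simpl. lia.
Qed.

Lemma stirling1u_rising a y :
  sumR (fun b => INR (stirling1u a b) * y ^ b) (S a) = prodR (fun i => y + INR i) a.
Proof.
  induction a.
  - simpl. ring.
  - rewrite sumR_shift, stirling1u_S0. simpl prodR. rewrite <- IHa.
    rewrite (sumR_ext _ (fun i => y * (INR (stirling1u a i) * y ^ i)
                                  + INR a * (INR (stirling1u a (S i)) * y ^ (S i)))).
    2:{ intros i _. simpl stirling1u. rewrite plus_INR, mult_INR. simpl. ring. }
    rewrite sumR_plus, !sumR_scal.
    rewrite (sumR_shift (fun b => INR (stirling1u a b) * y ^ b)). simpl sumR at 2.
    rewrite (stirling1u_gt a (S a)) by lia.
    assert (Hlow : INR a * INR (stirling1u a 0) = 0).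
    { destruct a; [simpl; ring| rewrite stirling1u_S0; simpl; ring]. }
    simpl. lra.
Qed.

Lemma stirling1R_falling a x :
  sumR (fun b => stirling1R a b * x ^ b) (S a) = prodR (fun i => x - INR i) a.
Proof.
  assert (Hneg : prodR (fun i => - x + INR i) a = (-1) ^ a * prodR (fun i => x - INR i) a).
  { induction a; simpl; [ring|]. rewrite IHa. ring. }
  rewrite (sumR_ext _ (fun b => (-1) ^ a * (INR (stirling1u a b) * (- x) ^ b))).
  - rewrite sumR_scal, stirling1u_rising, Hneg, <- Rmult_assoc.
    replace ((-1) ^ a * (-1) ^ a) with (((-1) ^ a) ^ 2) by ring. rewrite pow_m1_sq. ring.
  - intros b _. rewrite stirling1R_sign, pow_add.
    replace (- x) with (-1 * x) by ring. rewrite Rpow_mult_distr. ring.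
Qed.

Lemma exp_le_exp x y : x <= y -> exp x <= exp y.
Proof. intros [H|H]; [left; apply exp_increasing; auto| subst; lra]. Qed.

Lemma exp_pow x m : exp x ^ m = exp (INR m * x).
Proof.
  induction m; simpl pow; [simpl; rewrite Rmult_0_l, exp_0; ring|].
  rewrite IHm, S_INR, <- exp_plus. f_equal; ring.
Qed.

Lemma pow_div_fact_le_exp x n : 0 <= x -> x ^ n / INR (fact n) <= exp x.
Proof.
  intros Hx. eapply Rle_trans; [|apply (exp_ge_taylor x n Hx)].
  assert (Hterm : forall i, 0 <= x ^ i / INR (fact i))
    by (intros; apply Rdiv_le_0_compat; [apply pow_le; auto| apply INR_fact_lt_0]).
  destruct n; simpl; [lra|].
  assert (0 <= sum_f_R0 (fun i => x ^ i / INR (fact i)) n) by (apply cond_pos_sum; auto). lra.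
Qed.

Lemma inv_succ_le_ln_ratio j : (1 <= j)%nat -> / (INR j + 1) <= ln ((INR j + 1) / INR j).
Proof.
  intros Hj. assert (Hj' : 1 <= INR j) by (apply (le_INR 1); auto).
  assert (Hln := exp_ineq1_le (- ln ((INR j + 1) / INR j))).
  rewrite exp_Ropp, exp_ln in Hln by (apply Rdiv_lt_0_compat; lra).
  replace (/ ((INR j + 1) / INR j)) with (1 - / (INR j + 1)) in Hln by (field; lra). lra.
Qed.

(* Induction on [j]: the ratio of consecutive bounds is [e / (1 + 1/j)^j >= 1]. *)
Lemma fact_le_stirling j : (1 <= j)%nat ->
  INR (fact j) <= exp 1 * INR j * INR j ^ j * exp (- INR j).
Proof.
  induction j as [|j IH]; intros Hj; [lia|].
  destruct (Nat.eq_dec j 0) as [->|Hj0].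
  { simpl. rewrite Rmult_1_r, Rmult_1_r, Rmult_1_r, <- exp_plus, Rplus_opp_r, exp_0. lra. }
  specialize (IH ltac:(lia)).
  assert (Hjr : 1 <= INR j) by (apply (le_INR 1); lia).
  rewrite fact_simpl, mult_INR, S_INR.
  assert (Hratio : exp 1 * INR j ^ (S j) <= (INR j + 1) ^ (S j)).
  { assert (H1 : exp 1 <= ((INR j + 1) / INR j) ^ (S j)).
    { rewrite <- Rpower_pow by (apply Rdiv_lt_0_compat; lra). unfold Rpower.
      apply exp_le_exp. rewrite S_INR.
      assert (H2 := inv_succ_le_ln_ratio j ltac:(lia)).
      apply Rmult_le_compat_l with (r := INR j + 1) in H2; [|lra].
      rewrite Rinv_r in H2 by lra. lra. }
    unfold Rdiv in H1. rewrite Rpow_mult_distr, pow_inv in H1.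
    apply Rmult_le_compat_r with (r := INR j ^ S j) in H1; [|apply pow_le; lra].
    rewrite Rmult_assoc, Rinv_l in H1 by (apply pow_nonzero; lra). lra. }
  assert (He : 0 < exp 1) by apply exp_pos.
  assert (Hej : 0 < exp (- INR j)) by apply exp_pos.
  replace (exp (- (INR j + 1))) with (exp (- INR j) * / exp 1)
    by (rewrite <- exp_Ropp, <- exp_plus; f_equal; ring).
  apply Rle_trans with ((INR j + 1) * (exp 1 * INR j * INR j ^ j * exp (- INR j))).
  { apply Rmult_le_compat_l; [lra|auto]. }
  simpl pow in Hratio |- *.
  apply Rmult_le_reg_r with (r := exp 1); [auto|].
  replace (exp 1 * (INR j + 1) * ((INR j + 1) * (INR j + 1) ^ j) * (exp (- INR j) * / exp 1) * exp 1)
    with (exp 1 * (INR j + 1) * exp (- INR j) * ((INR j + 1) * (INR j + 1) ^ j)) by (field; lra).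
  replace ((INR j + 1) * (exp 1 * INR j * INR j ^ j * exp (- INR j)) * exp 1)
    with (exp 1 * (INR j + 1) * exp (- INR j) * (exp 1 * (INR j * INR j ^ j))) by ring.
  apply Rmult_le_compat_l; [|lra].
  apply Rmult_le_pos; [apply Rmult_le_pos|]; lra.
Qed.

Lemma one_plus_div_succ_pos w i : 0 <= w -> 0 < 1 + w / (INR i + 1).
Proof.
  intros Hw. assert (0 <= w / (INR i + 1)) by (apply Rdiv_le_0_compat; pose proof (pos_INR i); lra).
  lra.
Qed.

(* [prod (1 + w/(i+1)) <= (m + w)^m / m!] and [m! >= m^m e^-m]. *)
Lemma prod_one_plus_div_le m w : 0 <= w ->
  prodR (fun i => 1 + w / (INR i + 1)) m <= exp (INR m + w).
Proof.
  intros Hw. destruct m as [|m].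
  { simpl. rewrite Rplus_0_l. apply Rle_trans with (1 + w); [lra|apply exp_ineq1_le]. }
  set (M := S m).
  assert (HM : 1 <= INR M) by (apply (le_INR 1); unfold M; lia).
  assert (Hf : 0 < INR (fact M)) by apply INR_fact_lt_0.
  rewrite (prodR_ext _ (fun i => (INR i + 1 + w) * / (INR i + 1))).
  2:{ intros i _. field. pose proof (pos_INR i); lra. }
  rewrite prodR_mult, prodR_inv, <- fact_prodR by (intros i _; pose proof (pos_INR i); lra).
  assert (Hnum : prodR (fun i => INR i + 1 + w) M <= (INR M + w) ^ M).
  { rewrite <- prodR_const. apply prodR_le. intros i Hi.
    assert (INR (S i) <= INR M) by (apply le_INR; lia). rewrite S_INR in *.
    pose proof (pos_INR i). lra. }
  assert (Hden : / INR (fact M) <= exp (INR M) / INR M ^ M).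
  { assert (H := pow_div_fact_le_exp (INR M) M ltac:(lra)).
    assert (0 < INR M ^ M) by (apply pow_lt; lra).
    apply (Rmult_le_reg_l (INR M ^ M)); auto. unfold Rdiv in *.
    replace (INR M ^ M * (exp (INR M) * / INR M ^ M)) with (exp (INR M)) by (field; lra). lra. }
  apply Rle_trans with ((INR M + w) ^ M * (exp (INR M) / INR M ^ M)).
  { apply Rmult_le_compat; auto; [|left; apply Rinv_0_lt_compat; auto].
    apply prodR_nonneg; intros; pose proof (pos_INR i); lra. }
  replace ((INR M + w) ^ M * (exp (INR M) / INR M ^ M)) with (exp (INR M) * (1 + w / INR M) ^ M).
  2:{ unfold Rdiv. replace (1 + w * / INR M) with ((INR M + w) * / INR M) by (field; lra).
      rewrite Rpow_mult_distr, pow_inv. ring. }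
  rewrite exp_plus. apply Rmult_le_compat_l; [left; apply exp_pos|].
  apply Rle_trans with (exp (w / INR M) ^ M).
  { apply pow_incr. split; [|apply exp_ineq1_le].
    assert (0 <= w / INR M) by (apply Rdiv_le_0_compat; lra). lra. }
  rewrite exp_pow. right. f_equal. field. lra.
Qed.

Lemma harmonic_tail_le_ln L m : (1 <= L)%nat ->
  sumR (fun i => / (INR (L + i) + 1)) m <= ln (INR (L + m) / INR L).
Proof.
  intros HL. assert (HLr : 1 <= INR L) by (apply (le_INR 1); auto).
  induction m.
  - simpl. rewrite Nat.add_0_r. unfold Rdiv. rewrite Rinv_r, ln_1 by lra. lra.
  - simpl sumR. assert (H := inv_succ_le_ln_ratio (L + m) ltac:(lia)).
    assert (1 <= INR (L + m)) by (apply (le_INR 1); lia).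
    replace (ln (INR (L + S m) / INR L))
      with (ln (INR (L + m) / INR L) + ln ((INR (L + m) + 1) / INR (L + m))); [lra|].
    rewrite <- ln_mult by (apply Rdiv_lt_0_compat; lra). f_equal.
    rewrite Nat.add_succ_r, S_INR. field. lra.
Qed.

Lemma prod_one_plus_div_tail_le L m w : 0 <= w ->
  prodR (fun i => 1 + w / (INR (L + i) + 1)) m
  <= exp (w * sumR (fun i => / (INR (L + i) + 1)) m).
Proof.
  intros Hw. induction m; simpl sumR; simpl prodR; [rewrite Rmult_0_r, exp_0; lra|].
  rewrite (Rmult_plus_distr_l w), exp_plus. apply Rmult_le_compat.
  - apply prodR_nonneg. intros i _. left; apply one_plus_div_succ_pos; auto.
  - left; apply one_plus_div_succ_pos; auto.
  - auto.
  - apply exp_ineq1_le.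
Qed.

(* Split the product at [L ~ M e^(1-rho)]: the head is bounded by [exp (L + w)], and the
   harmonic sum of the tail is at most [ln (M / L) <= rho - 1]. *)
Lemma prod_one_plus_div_le_exp M L w rho : 0 <= w -> 1 <= rho -> (1 <= L)%nat ->
  INR M * exp (1 - rho) <= INR L ->
  prodR (fun i => 1 + w / (INR i + 1)) M <= exp (INR L + rho * w).
Proof.
  intros Hw Hr HL HML.
  destruct (le_lt_dec M L) as [HML'|HML'].
  - eapply Rle_trans; [apply prod_one_plus_div_le; auto|]. apply exp_le_exp.
    apply le_INR in HML'. nra.
  - replace M with (L + (M - L))%nat by lia. rewrite prodR_add.
    set (m := (M - L)%nat).
    assert (HLr : 1 <= INR L) by (apply (le_INR 1); auto).
    assert (Hln : ln (INR (L + m) / INR L) <= rho - 1).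
    { rewrite <- (ln_exp (rho - 1)).
      apply ln_le; [apply Rdiv_lt_0_compat; [apply lt_0_INR; lia| lra]|].
      unfold m. replace (L + (M - L))%nat with M by lia.
      replace (1 - rho) with (- (rho - 1)) in HML by ring. rewrite exp_Ropp in HML.
      assert (0 < exp (rho - 1)) by apply exp_pos.
      apply (Rmult_le_reg_r (INR L)); [lra|]. unfold Rdiv. rewrite Rmult_assoc, Rinv_l by lra.
      apply (Rmult_le_compat_r (exp (rho - 1))) in HML; [|lra].
      rewrite Rmult_assoc, Rinv_l in HML by lra. lra. }
    apply Rle_trans with (exp (INR L + w) * exp (w * (rho - 1))).
    + apply Rmult_le_compat.
      * apply prodR_nonneg. intros i _. left; apply one_plus_div_succ_pos; auto.
      * apply prodR_nonneg. intros i _. left; apply (one_plus_div_succ_pos w (L + i)); auto.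
      * apply prod_one_plus_div_le; auto.
      * eapply Rle_trans; [apply prod_one_plus_div_tail_le; auto|]. apply exp_le_exp.
        apply Rmult_le_compat_l; [lra|]. eapply Rle_trans; [apply harmonic_tail_le_ln|]; auto.
    + rewrite <- exp_plus. apply exp_le_exp. nra.
Qed.

Lemma nat_ceil_exists x : 0 <= x -> exists L : nat, (1 <= L)%nat /\ x <= INR L <= x + 1.
Proof.
  intros Hx. destruct (archimed x) as [H1 H2].
  assert (Hz : (0 < up x)%Z) by (apply lt_IZR; simpl; lra).
  exists (Z.to_nat (up x)). rewrite INR_IZR_INZ, Z2Nat.id by lia.
  split; [lia| lra].
Qed.

(** * Poisson expectations *)

Lemma poisson_pmf_nonneg l m : 0 <= l -> 0 <= poisson_pmf l m.
Proof.
  intros Hl. unfold poisson_pmf. apply Rdiv_le_0_compat; [|apply INR_fact_lt_0].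
  apply Rmult_le_pos; [left; apply exp_pos| apply pow_le; auto].
Qed.

Lemma poisson_pmf_0 l : poisson_pmf l 0 = exp (- l).
Proof. unfold poisson_pmf. simpl. field. Qed.

Lemma is_series_poisson_pmf l : is_series (poisson_pmf l) 1.
Proof.
  assert (H := is_exp_Reals l). unfold is_pseries in H.
  apply (is_series_scal_l (exp (- l))) in H.
  replace 1 with (scal (exp (- l)) (exp l)).
  2:{ change (scal (exp (- l)) (exp l)) with (exp (- l) * exp l).
      rewrite <- exp_plus, Rplus_opp_l. apply exp_0. }
  revert H. apply is_series_ext. intros m.
  change (scal (exp (- l)) (scal (pow_n l m) (/ INR (fact m))))
    with (exp (- l) * (pow_n l m * / INR (fact m))).
  rewrite pow_n_pow. unfold poisson_pmf, Rdiv. symmetry; apply Rmult_assoc.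
Qed.

Lemma Series_zero : Series (fun _ => 0) = 0.
Proof. rewrite (Series_ext _ (fun _ => 0 * 1)) by (intros; ring). rewrite Series_scal_l. ring. Qed.

Definition Epois (l : R) (a : nat -> R) : R := Series (fun m => poisson_pmf l m * a m).

Lemma ex_series_poisson_bounded l a B : 0 <= l -> (forall m, Rabs (a m) <= B) ->
  ex_series (fun m => poisson_pmf l m * a m).
Proof.
  intros Hl HB.
  apply (@ex_series_le R_AbsRing R_CompleteNormedModule _ (fun m => B * poisson_pmf l m)).
  - intros m. change (norm (poisson_pmf l m * a m)) with (Rabs (poisson_pmf l m * a m)).
    rewrite Rabs_mult, Rabs_pos_eq, Rmult_comm by (apply poisson_pmf_nonneg; auto).
    apply Rmult_le_compat_r; [apply poisson_pmf_nonneg|]; auto.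
  - exists (B * 1). apply (@is_series_scal_l R_AbsRing R_NormedModule).
    apply is_series_poisson_pmf.
Qed.

Lemma Epois_const l c : Epois l (fun _ => c) = c.
Proof. unfold Epois. rewrite Series_scal_r, (is_series_unique _ _ (is_series_poisson_pmf l)). ring. Qed.

Lemma Epois_ext l a b : (forall m, a m = b m) -> Epois l a = Epois l b.
Proof. intros H. unfold Epois. apply Series_ext. intros m; rewrite H; reflexivity. Qed.

Lemma Epois_scal l c a : Epois l (fun m => c * a m) = c * Epois l a.
Proof. unfold Epois. rewrite <- Series_scal_l. apply Series_ext. intros; ring. Qed.

Section BoundedEpois.
Variables (l : R) (a b : nat -> R) (Ba Bb : R).
Hypotheses (Hl : 0 <= l) (Ha : forall m, Rabs (a m) <= Ba) (Hb : forall m, Rabs (b m) <= Bb).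

Lemma Epois_plus : Epois l (fun m => a m + b m) = Epois l a + Epois l b.
Proof.
  unfold Epois. rewrite <- Series_plus by (eapply ex_series_poisson_bounded; eauto).
  apply Series_ext. intros; ring.
Qed.

Lemma Epois_le : (forall m, a m <= b m) -> Epois l a <= Epois l b.
Proof.
  intros Hab. unfold Epois.
  assert (E : Series (fun m => poisson_pmf l m * b m) - Series (fun m => poisson_pmf l m * a m)
              = Series (fun m => poisson_pmf l m * (b m - a m))).
  { rewrite <- Series_minus by (eapply ex_series_poisson_bounded; eauto).
    apply Series_ext; intros; ring. }
  assert (0 <= Series (fun m => poisson_pmf l m * (b m - a m))); [|lra].
  rewrite <- Series_zero. apply Series_le.
  - intros m. split; [lra|].
    apply Rmult_le_pos; [apply poisson_pmf_nonneg; auto| specialize (Hab m); lra].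
  - apply (ex_series_poisson_bounded l _ (Ba + Bb)); auto. intros m.
    unfold Rminus. eapply Rle_trans; [apply Rabs_triang|].
    rewrite Rabs_Ropp. specialize (Ha m); specialize (Hb m). lra.
Qed.

End BoundedEpois.

Lemma Epois_abs_le l a B : 0 <= l -> (forall m, Rabs (a m) <= B) -> Rabs (Epois l a) <= B.
Proof.
  intros Hl Ha. assert (HB : 0 <= B) by (specialize (Ha O); pose proof (Rabs_pos (a O)); lra).
  assert (Hc : forall c, Rabs c <= B -> forall m : nat, Rabs ((fun _ => c) m) <= B) by auto.
  assert (Hrange : forall m, - B <= a m <= B) by (intros m; apply Rabs_le_between, Ha).
  apply Rabs_le. split.
  - rewrite <- (Epois_const l (- B)). apply (Epois_le l _ _ B B); auto.
    + apply Hc. rewrite Rabs_Ropp, Rabs_pos_eq; lra.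
    + intros m; apply Hrange.
  - rewrite <- (Epois_const l B). apply (Epois_le l _ _ B B); auto.
    + apply Hc. rewrite Rabs_pos_eq; lra.
    + intros m; apply Hrange.
Qed.

Lemma Epois_finite l a B N : 0 <= l -> (forall m, Rabs (a m) <= B) ->
  (forall m, (N <= m)%nat -> a m = 0) -> Epois l a = sumR (fun m => poisson_pmf l m * a m) N.
Proof.
  intros Hl Ha Hz. unfold Epois. destruct N.
  - rewrite (Series_ext _ (fun _ => 0)), Series_zero by (intros m; rewrite Hz by lia; ring).
    reflexivity.
  - rewrite (Series_incr_n _ (S N)) by (lia || (eapply ex_series_poisson_bounded; eauto)).
    rewrite (Series_ext (fun k => _) (fun _ => 0)) by (intros m; rewrite Hz by lia; ring).
    rewrite Series_zero, Rplus_0_r. simpl pred.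
    clear. induction N; simpl in *; [ring|]. rewrite IHN. reflexivity.
Qed.

Lemma pois_expect_cons l ls f :
  pois_expect (l :: ls) f = Epois l (fun m => pois_expect ls (fun t => f (m :: t))).
Proof. reflexivity. Qed.

Lemma pois_expect_abs_le ls f B : List.Forall (fun l => 0 <= l) ls ->
  (forall t, length t = length ls -> Rabs (f t) <= B) -> Rabs (pois_expect ls f) <= B.
Proof.
  revert f. induction ls as [|l ls IH]; intros f Hls Hf.
  - apply Hf. reflexivity.
  - inversion Hls; subst. rewrite pois_expect_cons. apply Epois_abs_le; auto.
    intros m. apply IH; auto. intros t Ht. apply Hf. simpl. lia.
Qed.

Lemma pois_expect_le ls f g Bf Bg : List.Forall (fun l => 0 <= l) ls ->
  (forall t, length t = length ls -> Rabs (f t) <= Bf) ->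
  (forall t, length t = length ls -> Rabs (g t) <= Bg) ->
  (forall t, length t = length ls -> f t <= g t) -> pois_expect ls f <= pois_expect ls g.
Proof.
  revert f g. induction ls as [|l ls IH]; intros f g Hls Hf Hg Hfg.
  - apply Hfg. reflexivity.
  - inversion Hls; subst. rewrite !pois_expect_cons. apply (Epois_le l _ _ Bf Bg); auto.
    + intros m. apply pois_expect_abs_le; auto. intros t Ht. apply Hf. simpl; lia.
    + intros m. apply pois_expect_abs_le; auto. intros t Ht. apply Hg. simpl; lia.
    + intros m. apply IH; auto; intros t Ht; [apply Hf|apply Hg|apply Hfg]; simpl; lia.
Qed.

Definition lsum {A : Type} (f : A -> R) (xs : list A) : R :=
  fold_right (fun x s => f x + s) 0 xs.

Lemma lsum_cons {A : Type} (f : A -> R) x xs : lsum f (x :: xs) = f x + lsum f xs.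
Proof. reflexivity. Qed.

Lemma lsum_map {A B : Type} (f : B -> R) (h : A -> B) xs :
  lsum f (map h xs) = lsum (fun x => f (h x)) xs.
Proof. induction xs as [|x xs IH]; [reflexivity|]. simpl map. rewrite !lsum_cons, IH. reflexivity. Qed.

Lemma lsum_le_length {A : Type} (f : A -> R) xs B : (forall x, In x xs -> f x <= B) ->
  lsum f xs <= INR (length xs) * B.
Proof.
  induction xs as [|x xs IH]; intros H; unfold lsum in *; simpl fold_right; simpl length.
  - simpl; lra.
  - rewrite S_INR. assert (f x <= B) by (apply H; left; auto).
    assert (IH' := IH (fun y Hy => H y (or_intror Hy))). lra.
Qed.

Lemma lsum_abs_le_length {A : Type} (f : A -> R) xs B : (forall x, In x xs -> Rabs (f x) <= B) ->
  Rabs (lsum f xs) <= INR (length xs) * B.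
Proof.
  induction xs as [|x xs IH]; intros H; unfold lsum in *; simpl fold_right; simpl length.
  - rewrite Rabs_R0. simpl; lra.
  - rewrite S_INR. eapply Rle_trans; [apply Rabs_triang|].
    assert (Rabs (f x) <= B) by (apply H; left; auto).
    assert (IH' := IH (fun y Hy => H y (or_intror Hy))). lra.
Qed.

Lemma Rabs_sq_le x y : Rabs x <= y -> Rabs (x ^ 2) <= y ^ 2.
Proof. intros H. rewrite <- RPow_abs. apply pow_incr. split; [apply Rabs_pos|auto]. Qed.

Section SumOfIndependent.
Variables (g : nat -> R) (B : R).
Hypothesis HgB : forall m, Rabs (g m) <= B.

Lemma Epois_sq_le l c : 0 <= l ->
  Epois l (fun m => (c + g m) ^ 2) <= (c + Epois l g) ^ 2 + Epois l (fun m => g m ^ 2).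
Proof.
  intros Hl.
  assert (Hg2 : forall m, Rabs (g m ^ 2) <= B ^ 2) by (intros; apply Rabs_sq_le; auto).
  assert (H2cg : forall m, Rabs (2 * c * g m) <= Rabs (2 * c) * B).
  { intros m. rewrite Rabs_mult. apply Rmult_le_compat_l; [apply Rabs_pos| auto]. }
  rewrite (Epois_ext l _ (fun m => c ^ 2 + (2 * c * g m + g m ^ 2))) by (intros; ring).
  rewrite (Epois_plus l _ _ (Rabs (c ^ 2)) (Rabs (2 * c) * B + B ^ 2)); auto.
  2:{ intros; lra. }
  2:{ intros m. eapply Rle_trans; [apply Rabs_triang|]. apply Rplus_le_compat; auto. }
  rewrite Epois_const, (Epois_plus l _ _ (Rabs (2 * c) * B) (B ^ 2)), Epois_scal by auto.
  assert (0 <= Epois l g ^ 2) by apply pow2_ge_0. nra.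
Qed.

(* The cross terms factor by independence, and each variance is at most the second moment. *)
Lemma pois_expect_sq_lsum_le ls : List.Forall (fun l => 0 <= l) ls -> forall a,
  pois_expect ls (fun t => (a + lsum g t) ^ 2) <=
  (a + lsum (fun l => Epois l g) ls) ^ 2 + lsum (fun l => Epois l (fun m => g m ^ 2)) ls.
Proof.
  induction ls as [|l ls IH]; intros Hls a; [simpl; lra|].
  inversion Hls as [|? ? Hl Hls']; subst. rewrite pois_expect_cons, !lsum_cons.
  set (mu := lsum (fun l => Epois l g) ls). set (nu := lsum (fun l => Epois l (fun m => g m ^ 2)) ls).
  set (n := INR (length ls)). assert (Hn : 0 <= n) by apply pos_INR.
  assert (Hpos : forall x, In x ls -> 0 <= x) by (apply Forall_forall; auto).
  assert (Hmu : Rabs mu <= n * B) by (apply lsum_abs_le_length; intros; apply Epois_abs_le; auto).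
  assert (Hnu : Rabs nu <= n * B ^ 2)
    by (apply lsum_abs_le_length; intros; apply Epois_abs_le; auto; intros; apply Rabs_sq_le; auto).
  assert (Hshift : forall m, pois_expect ls (fun t => (a + lsum g (m :: t)) ^ 2)
                             = pois_expect ls (fun t => ((a + g m) + lsum g t) ^ 2)).
  { intros m. f_equal. apply functional_extensionality. intros t.
    rewrite lsum_cons, Rplus_assoc. reflexivity. }
  apply Rle_trans with (Epois l (fun m => (a + mu + g m) ^ 2 + nu)).
  - apply (Epois_le l _ _ ((Rabs a + B + n * B) ^ 2) ((Rabs a + n * B + B) ^ 2 + n * B ^ 2)); auto.
    + intros m. rewrite Hshift. apply pois_expect_abs_le; auto. intros t Ht. apply Rabs_sq_le.
      assert (Ht' : Rabs (lsum g t) <= INR (length t) * B) by (apply lsum_abs_le_length; auto).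
      rewrite Ht in Ht'. fold n in Ht'. specialize (HgB m).
      pose proof (Rabs_triang a (g m)). pose proof (Rabs_triang (a + g m) (lsum g t)). lra.
    + intros m. eapply Rle_trans; [apply Rabs_triang|]. apply Rplus_le_compat; [|auto].
      apply Rabs_sq_le. specialize (HgB m).
      pose proof (Rabs_triang a mu). pose proof (Rabs_triang (a + mu) (g m)). lra.
    + intros m. rewrite Hshift. eapply Rle_trans; [apply IH; auto|]. right. fold mu nu. ring.
  - rewrite (Epois_plus l _ _ ((Rabs (a + mu) + B) ^ 2) (Rabs nu)), Epois_const; auto.
    + pose proof (Epois_sq_le l (a + mu) Hl). lra.
    + intros m. apply Rabs_sq_le. specialize (HgB m). pose proof (Rabs_triang (a + mu) (g m)). lra.
    + intros; lra.
Qed.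

End SumOfIndependent.

(** * The estimator as a sum over colours *)

Lemma urn_length_le k ks : is_urn k ks -> (length ks <= k)%nat.
Proof. intros [HF <-]. induction HF; simpl; lia. Qed.

Lemma ucoef_outside k n M j : (j = 0 \/ M < j)%nat -> ucoef k n M j = 0.
Proof.
  intros Hj. unfold ucoef.
  destruct (Nat.leb_spec 1 j), (Nat.leb_spec j M); simpl; auto; lia.
Qed.

Lemma ucoef_inside k n M j : (1 <= j <= M)%nat ->
  ucoef k n M j
  = (-1) ^ (M + 1) * (INR (fact j) / INR (fact M)) * (INR k / n) ^ j * stirling1R (M + 1) (j + 1).
Proof.
  intros Hj. unfold ucoef.
  destruct (Nat.leb_spec 1 j), (Nat.leb_spec j M); simpl; auto; lia.
Qed.

Lemma C_seen_cons x N : C_seen (x :: N) = (if Nat.eqb x 0 then 0 else 1) + C_seen N.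
Proof.
  unfold C_seen. simpl filter. destruct (Nat.eqb x 0); cbn [negb length]; [ring|].
  rewrite S_INR. ring.
Qed.

Lemma C_seen_le_length N : C_seen N <= INR (length N).
Proof.
  induction N as [|x N IH]; [unfold C_seen; simpl; lra|].
  rewrite C_seen_cons. simpl length. rewrite S_INR. destruct (Nat.eqb x 0); lra.
Qed.

Lemma fingerprint_cons x N j :
  fingerprint (x :: N) j = ((if Nat.eqb x j then 1 else 0) + fingerprint N j)%nat.
Proof. unfold fingerprint. simpl filter. destruct (Nat.eqb x j); reflexivity. Qed.

Lemma sum_fingerprint_cons f x N s c :
  fold_right Rplus 0 (map (fun j => f j * INR (fingerprint (x :: N) j)) (seq s c)) =
  (if ((s <=? x) && (x <? s + c))%bool then f x else 0)
  + fold_right Rplus 0 (map (fun j => f j * INR (fingerprint N j)) (seq s c)).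
Proof.
  revert s. induction c as [|c IH]; intros s; simpl.
  - destruct (Nat.leb_spec s x), (Nat.ltb_spec x (s + 0)); simpl; lia || ring.
  - rewrite IH, fingerprint_cons, plus_INR.
    destruct (Nat.eqb_spec x s) as [->|Hxs].
    + destruct (Nat.leb_spec (S s) s), (Nat.leb_spec s s), (Nat.ltb_spec s (s + S c));
        simpl; try lia. ring.
    + replace (S s + c)%nat with (s + S c)%nat by lia.
      destruct (Nat.leb_spec (S s) x), (Nat.leb_spec s x); simpl; try lia; ring.
Qed.

Definition colour_error (k : nat) (n : R) (M m : nat) : R :=
  (if Nat.eqb m 0 then 0 else 1) - 1 + ucoef k n M m.

Lemma C_tilde_sub_length k n M N :
  C_tilde k n M N - INR (length N) = lsum (colour_error k n M) N.
Proof.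
  induction N as [|x N IH].
  - unfold C_tilde, C_seen. simpl. induction (seq 1 M) as [|j s IHs]; simpl; [ring|].
    unfold fingerprint in *. simpl in *. lra.
  - unfold C_tilde in *. rewrite C_seen_cons, sum_fingerprint_cons, lsum_cons, <- IH.
    simpl length. rewrite S_INR. unfold colour_error.
    destruct (Nat.leb_spec 1 x), (Nat.ltb_spec x (1 + M)); simpl;
      try (rewrite (ucoef_outside k n M x) by lia); ring.
Qed.

Lemma colour_error_large k n M m : (M < m)%nat -> colour_error k n M m = 0.
Proof.
  intros H. unfold colour_error. rewrite ucoef_outside by lia.
  destruct (Nat.eqb_spec m 0); [lia| ring].
Qed.

Lemma colour_error_0 k n M : colour_error k n M 0 = -1.
Proof. unfold colour_error. rewrite ucoef_outside by lia. simpl. ring. Qed.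

Lemma C_hat_sq_err_le k n M N C : C_seen N <= C -> C <= INR k ->
  (C_hat k n M N - C) ^ 2 <= (C_tilde k n M N - C) ^ 2.
Proof.
  intros H1 H2. unfold C_hat. set (x := C_tilde k n M N). set (s := C_seen N) in *.
  unfold Rmax, Rmin.
  destruct (Rle_dec x s); [destruct (Rle_dec s (INR k))| destruct (Rle_dec x (INR k))].
  - assert (0 <= (s - x) * (2 * C - s - x)) by (apply Rmult_le_pos; lra). nra.
  - lra.
  - lra.
  - assert (0 <= (x - INR k) * (x + INR k - 2 * C)) by (apply Rmult_le_pos; lra). nra.
Qed.

(** * Moments of the error of one colour *)

Definition colour_error_bound (k : nat) (n : R) (M : nat) : R :=
  1 + sumR (fun j => Rabs (ucoef k n M j)) (S M).

Lemma Rabs_colour_error_le k n M m : Rabs (colour_error k n M m) <= colour_error_bound k n M.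
Proof.
  unfold colour_error_bound.
  assert (Hs : 0 <= sumR (fun j => Rabs (ucoef k n M j)) (S M))
    by (apply sumR_nonneg; intros; apply Rabs_pos).
  destruct (le_lt_dec m M) as [H|H]; [|rewrite colour_error_large, Rabs_R0 by auto; lra].
  destruct m as [|m]; [rewrite colour_error_0, Rabs_left; lra|].
  unfold colour_error. simpl Nat.eqb. cbv iota. rewrite Rminus_diag, Rplus_0_l.
  assert (Rabs (ucoef k n M (S m)) <= sumR (fun j => Rabs (ucoef k n M j)) (S M)); [|lra].
  apply (sumR_term_le (fun j => Rabs (ucoef k n M j))); [intros; apply Rabs_pos| lia].
Qed.

(* With [l = t n / k], the [(k/n)^j] in [u_j] cancels the [l^j] in the Poisson weight, leaving the
   falling factorial [t (t-1) ... (t-M)] by [stirling1R_falling]. *)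
Lemma Epois_colour_error k n M t : (1 <= k)%nat -> 0 < n -> (1 <= t)%nat ->
  let l := n * INR t / INR k in
  Epois l (colour_error k n M)
  = exp (- l) * (-1) ^ (M + 1) * prodR (fun i => INR t - INR i) (S M) / (INR t * INR (fact M)).
Proof.
  intros Hk Hn Ht l.
  assert (Hkr : 0 < INR k) by (apply lt_0_INR; lia).
  assert (Htr : 0 < INR t) by (apply lt_0_INR; lia).
  assert (Hl : 0 <= l) by (unfold l; apply Rdiv_le_0_compat; [apply Rmult_le_pos|]; lra).
  assert (Hf : 0 < INR (fact M)) by apply INR_fact_lt_0.
  rewrite (Epois_finite l _ (colour_error_bound k n M) (S M)), sumR_shift, poisson_pmf_0,
    colour_error_0; auto.
  2:{ apply Rabs_colour_error_le. }
  2:{ intros m Hm. apply colour_error_large. lia. }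
  rewrite (sumR_ext _ (fun j => (exp (- l) * (-1) ^ (M + 1) / INR (fact M) / INR t) *
                               (stirling1R (M + 1) (S (S j)) * INR t ^ (S (S j))))).
  2:{ intros j Hj. unfold colour_error. simpl Nat.eqb. cbv iota. rewrite ucoef_inside by lia.
      unfold poisson_pmf. replace (S j + 1)%nat with (S (S j)) by lia.
      replace l with (INR t * (n / INR k)) by (unfold l; field; lra).
      rewrite Rpow_mult_distr.
      replace ((n / INR k) ^ S j) with (/ ((INR k / n) ^ S j))
        by (rewrite <- pow_inv; f_equal; field; lra).
      assert (0 < (INR k / n) ^ j) by (apply pow_lt, Rdiv_lt_0_compat; lra).
      pose proof (INR_fact_lt_0 (S j)).
      simpl pow. field. repeat split; lra. }
  rewrite sumR_scal.
  assert (HS := stirling1R_falling (S M) (INR t)).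
  rewrite sumR_shift, sumR_shift, !stirling1R_sign, stirling1u_S0, stirling1u_S1 in HS.
  replace (M + 1)%nat with (S M) by lia.
  set (Sg := sumR (fun i => stirling1R (S M) (S (S i)) * INR t ^ S (S i)) M) in *.
  assert (ESg : Sg = prodR (fun i => INR t - INR i) (S M) - (-1) ^ (S M + 1) * INR (fact M) * INR t)
    by (simpl INR in HS; simpl pow in HS |- *; lra).
  rewrite ESg. replace (S M + 1)%nat with (S (S M)) by lia.
  simpl pow. field_simplify; [|lra|lra].
  rewrite pow_m1_sq. unfold Rdiv. apply Rmult_eq_compat_r. ring.
Qed.

(* For [t > M]: [t(t-1)...(t-M) / (t M!) <= t^M / M! <= e^t]. *)
Lemma Rabs_Epois_colour_error_le k n M t : (1 <= k)%nat -> 0 < n -> (1 <= t)%nat -> 1 <= n / INR k ->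
  Rabs (Epois (n * INR t / INR k) (colour_error k n M)) <= exp (- (n / INR k - 1) * INR (S M)).
Proof.
  intros Hk Hn Ht Hr. rewrite Epois_colour_error by auto.
  assert (Hkr : 0 < INR k) by (apply lt_0_INR; lia).
  assert (Htr : 0 < INR t) by (apply lt_0_INR; lia).
  assert (Hf : 0 < INR (fact M)) by apply INR_fact_lt_0.
  destruct (le_lt_dec t M) as [HtM|HtM].
  { rewrite (prodR_eq0 _ _ t) by (lia || ring). unfold Rdiv.
    rewrite !Rmult_0_r, Rmult_0_l, Rabs_R0. left; apply exp_pos. }
  set (P := prodR (fun i => INR t - INR i) (S M)).
  assert (HP0 : 0 <= P).
  { apply prodR_nonneg. intros i Hi. assert (INR i <= INR t) by (apply le_INR; lia). lra. }
  assert (HP : P <= INR t ^ S M).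
  { rewrite <- prodR_const. apply prodR_le. intros i Hi.
    assert (INR i <= INR t) by (apply le_INR; lia). pose proof (pos_INR i). lra. }
  unfold Rdiv. rewrite !Rabs_mult, pow_1_abs, (Rabs_pos_eq P), Rabs_pos_eq, (Rabs_pos_eq (/ _))
    by (lra || (left; apply exp_pos) || (left; apply Rinv_0_lt_compat; nra)).
  assert (H1 : P * / (INR t * INR (fact M)) <= INR t ^ M / INR (fact M)).
  { simpl pow in HP. rewrite Rinv_mult.
    apply (Rmult_le_reg_l (INR t)); [lra|].
    replace (INR t * (P * (/ INR t * / INR (fact M)))) with (P * / INR (fact M)) by (field; lra).
    unfold Rdiv. rewrite <- Rmult_assoc. apply Rmult_le_compat_r; [left; apply Rinv_0_lt_compat|]; lra. }
  assert (H2 := pow_div_fact_le_exp (INR t) M ltac:(lra)).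
  apply Rle_trans with (exp (- (n * INR t / INR k)) * exp (INR t)).
  - rewrite Rmult_1_r, Rmult_assoc. apply Rmult_le_compat_l; [left; apply exp_pos| lra].
  - rewrite <- exp_plus. apply exp_le_exp.
    assert (INR (S M) <= INR t) by (apply le_INR; lia).
    replace (- (n * INR t / INR k) + INR t) with (- (n / INR k - 1) * INR t) by (field; lra). nra.
Qed.

Lemma sum_stirling1u_succ_pow M w : 0 < w ->
  sumR (fun i => INR (stirling1u (S M) (S i)) / INR (fact M) * w ^ i) (S M)
  = prodR (fun i => 1 + w / (INR i + 1)) M.
Proof.
  intros Hw. assert (H := stirling1u_rising (S M) w).
  rewrite sumR_shift, prodR_shift, stirling1u_S0 in H. change (INR 0) with 0 in H.
  rewrite Rplus_0_r, Rmult_0_l, Rplus_0_l in H.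
  rewrite (sumR_ext _ (fun i => w * (INR (stirling1u (S M) (S i)) * w ^ i))) in H
    by (intros; simpl pow; ring).
  rewrite sumR_scal in H. apply Rmult_eq_reg_l in H; [|lra].
  rewrite (sumR_ext _ (fun i => / INR (fact M) * (INR (stirling1u (S M) (S i)) * w ^ i)))
    by (intros; unfold Rdiv; ring).
  rewrite sumR_scal, H, fact_prodR, <- prodR_inv, <- prodR_mult
    by (intros i _; pose proof (pos_INR i); lra).
  apply prodR_ext. intros i _. rewrite S_INR. field. pose proof (pos_INR i); lra.
Qed.

Lemma stirling1u_pow_le_exp M J L w rho : (J <= M)%nat -> 0 < w -> 1 <= rho -> (1 <= L)%nat ->
  INR M * exp (1 - rho) <= INR L ->
  INR (stirling1u (S M) (S J)) / INR (fact M) * w ^ J <= exp (INR L + rho * w).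
Proof.
  intros HJ Hw Hrho HL HML.
  eapply Rle_trans; [|apply prod_one_plus_div_le_exp; eauto; lra].
  rewrite <- sum_stirling1u_succ_pow by auto.
  apply (sumR_term_le (fun i => INR (stirling1u (S M) (S i)) / INR (fact M) * w ^ i)); [|lia].
  intros i _. apply Rmult_le_pos; [apply Rdiv_le_0_compat; [apply pos_INR| apply INR_fact_lt_0]|].
  apply pow_le; lra.
Qed.

Lemma poisson_colour_error_sq k n M t J : (1 <= k)%nat -> 0 < n -> (1 <= t)%nat -> (1 <= J <= M)%nat ->
  let l := n * INR t / INR k in
  poisson_pmf l J * colour_error k n M J ^ 2
  = exp (- l) * INR (fact J) * (INR t * INR k / n) ^ J
    * (INR (stirling1u (S M) (S J)) / INR (fact M)) ^ 2.
Proof.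
  intros Hk Hn Ht HJ l.
  assert (Hkr : 0 < INR k) by (apply lt_0_INR; lia).
  assert (Htr : 0 < INR t) by (apply lt_0_INR; lia).
  assert (Hf : 0 < INR (fact M)) by apply INR_fact_lt_0.
  assert (HfJ : 0 < INR (fact J)) by apply INR_fact_lt_0.
  unfold colour_error. destruct J as [|j]; [lia|]. simpl Nat.eqb. cbv iota.
  rewrite ucoef_inside, stirling1R_sign by lia.
  replace (M + 1)%nat with (S M) by lia. replace (S j + 1)%nat with (S (S j)) by lia.
  unfold poisson_pmf, l. replace (1 - 1) with 0 by ring. rewrite Rplus_0_l.
  unfold Rdiv. rewrite !Rpow_mult_distr, !pow_m1_sq, !pow_inv.
  assert (0 < n ^ S j) by (apply pow_lt; lra).
  assert (0 < INR k ^ S j) by (apply pow_lt; lra).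
  field. repeat split; lra.
Qed.

Lemma le_half_add_of_sq_le a l J : 0 <= l -> 0 <= J -> a ^ 2 <= 2 * l * J -> a <= l / 2 + J.
Proof.
  intros Hl HJ Ha. apply Rsqr_incr_0_var; [|lra]. unfold Rsqr.
  assert (0 <= (l / 2 - J) ^ 2) by apply pow2_ge_0. nra.
Qed.

(* With [x = t k / n] and [w = sqrt (J x)]: [J! x^J <= e J e^-J w^(2J)] by [fact_le_stirling], the
   Stirling coefficient times [w^J] is at most [exp (L + rho w)], and [2 rho w <= l/2 + J] because
   [(2 rho w)^2 = 4 rho^2 J x <= 2 l J]. *)
Lemma poisson_colour_error_sq_le k n M t L rho J :
  (1 <= k)%nat -> 0 < n -> (1 <= t)%nat -> (1 <= J <= M)%nat ->
  1 <= rho -> rho ^ 2 <= (n / INR k) ^ 2 / 2 -> (1 <= L)%nat -> INR M * exp (1 - rho) <= INR L ->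
  let l := n * INR t / INR k in
  poisson_pmf l J * colour_error k n M J ^ 2 <= exp 1 * INR M * exp (- l / 2) * exp (2 * INR L).
Proof.
  intros Hk Hn Ht HJ Hrho Hrho2 HL HML l.
  unfold l. rewrite poisson_colour_error_sq by auto. fold l.
  assert (Hkr : 0 < INR k) by (apply lt_0_INR; lia).
  assert (Htr : 0 < INR t) by (apply lt_0_INR; lia).
  assert (HJr : 1 <= INR J) by (apply (le_INR 1); lia).
  assert (HJM : INR J <= INR M) by (apply le_INR; lia).
  assert (Hl : 0 <= l) by (unfold l; apply Rdiv_le_0_compat; nra).
  set (x := INR t * INR k / n). assert (Hx : 0 < x) by (apply Rdiv_lt_0_compat; nra).
  set (a := INR (stirling1u (S M) (S J)) / INR (fact M)).
  assert (Ha : 0 <= a) by (apply Rdiv_le_0_compat; [apply pos_INR| apply INR_fact_lt_0]).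
  set (w := sqrt (INR J * x)).
  assert (Hw : 0 < w) by (apply sqrt_lt_R0; nra).
  assert (Hw2 : w ^ 2 = INR J * x) by (unfold w; rewrite <- Rsqr_pow2; apply Rsqr_sqrt; nra).
  assert (Hterm : INR (fact J) * x ^ J * a ^ 2
                  <= exp 1 * INR J * exp (- INR J) * exp (2 * (INR L + rho * w))).
  { assert (Hcoef : (a * w ^ J) ^ 2 <= exp (2 * (INR L + rho * w))).
    { rewrite <- (exp_pow _ 2). apply pow_incr. split.
      - apply Rmult_le_pos; [auto| apply pow_le; lra].
      - apply stirling1u_pow_le_exp; auto; lia. }
    replace ((a * w ^ J) ^ 2) with (INR J ^ J * x ^ J * a ^ 2) in Hcoef
      by (rewrite Rpow_mult_distr, <- pow_mult, Nat.mul_comm, pow_mult, Hw2, Rpow_mult_distr; ring).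
    assert (Hfact := fact_le_stirling J ltac:(lia)).
    assert (0 <= x ^ J * a ^ 2) by (apply Rmult_le_pos; [apply pow_le; lra| apply pow2_ge_0]).
    assert (0 < exp 1 * INR J * exp (- INR J))
      by (apply Rmult_lt_0_compat; [apply Rmult_lt_0_compat; [apply exp_pos| lra]| apply exp_pos]).
    nra. }
  assert (Hamgm : 2 * rho * w <= l / 2 + INR J).
  { apply le_half_add_of_sq_le; [lra| lra|].
    assert (Hr2x : (n / INR k) ^ 2 * x = l) by (unfold l, x; field; lra).
    replace ((2 * rho * w) ^ 2) with (4 * rho ^ 2 * (INR J * x)) by (rewrite <- Hw2; ring).
    rewrite <- Hr2x. assert (0 <= INR J * x) by nra. nra. }
  assert (Hexp : exp (- l) * exp (- INR J) * exp (2 * (INR L + rho * w))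
                 <= exp (- l / 2) * exp (2 * INR L))
    by (rewrite <- !exp_plus; apply exp_le_exp; lra).
  pose proof (exp_pos 1). pose proof (exp_pos (- l)).
  pose proof (exp_pos (- l / 2)). pose proof (exp_pos (2 * INR L)).
  apply Rle_trans with (exp 1 * INR J * (exp (- l) * exp (- INR J) * exp (2 * (INR L + rho * w)))).
  { replace (exp (- l) * INR (fact J) * x ^ J * a ^ 2)
      with (exp (- l) * (INR (fact J) * x ^ J * a ^ 2)) by ring.
    replace (exp 1 * INR J * (exp (- l) * exp (- INR J) * exp (2 * (INR L + rho * w))))
      with (exp (- l) * (exp 1 * INR J * exp (- INR J) * exp (2 * (INR L + rho * w)))) by ring.
    apply Rmult_le_compat_l; lra. }
  replace (exp 1 * INR M * exp (- l / 2) * exp (2 * INR L))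
    with (exp 1 * INR M * (exp (- l / 2) * exp (2 * INR L))) by ring.
  apply Rmult_le_compat; [nra| left; repeat apply Rmult_lt_0_compat; apply exp_pos| nra| exact Hexp].
Qed.

Lemma Epois_colour_error_sq_le k n M t L rho : (1 <= k)%nat -> 0 < n -> (1 <= t)%nat ->
  1 <= n / INR k -> 1 <= rho -> rho ^ 2 <= (n / INR k) ^ 2 / 2 -> (1 <= L)%nat ->
  INR M * exp (1 - rho) <= INR L ->
  Epois (n * INR t / INR k) (fun m => colour_error k n M m ^ 2)
  <= exp (- (n / INR k)) + exp 1 * INR M ^ 2 * exp (- (n / INR k) / 2) * exp (2 * INR L).
Proof.
  intros Hk Hn Ht Hr Hrho Hrho2 HL HML.
  set (l := n * INR t / INR k).
  assert (Hkr : 0 < INR k) by (apply lt_0_INR; lia).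
  assert (Htr : 1 <= INR t) by (apply (le_INR 1); lia).
  assert (Hrl : n / INR k <= l) by (unfold l, Rdiv; rewrite (Rmult_comm n), Rmult_assoc; nra).
  rewrite (Epois_finite l _ (colour_error_bound k n M ^ 2) (S M)), sumR_shift, poisson_pmf_0,
    colour_error_0.
  2:{ unfold l. apply Rdiv_le_0_compat; [apply Rmult_le_pos|]; lra. }
  2:{ intros m. apply Rabs_sq_le, Rabs_colour_error_le. }
  2:{ intros m Hm. rewrite colour_error_large by lia. ring. }
  assert (Hs : sumR (fun j => poisson_pmf l (S j) * colour_error k n M (S j) ^ 2) M <=
               INR M * (exp 1 * INR M * exp (- l / 2) * exp (2 * INR L))).
  { rewrite <- sumR_const. apply sumR_le. intros j Hj.
    apply (poisson_colour_error_sq_le k n M t L rho (S j)); auto; lia. }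
  assert (exp (- l) <= exp (- (n / INR k))) by (apply exp_le_exp; lra).
  assert (exp (- l / 2) <= exp (- (n / INR k) / 2)) by (apply exp_le_exp; lra).
  assert (0 <= exp 1 * INR M ^ 2 * exp (2 * INR L)).
  { apply Rmult_le_pos; [apply Rmult_le_pos; [left; apply exp_pos| apply pow2_ge_0]|].
    left; apply exp_pos. }
  replace (INR M * (exp 1 * INR M * exp (- l / 2) * exp (2 * INR L)))
    with (exp 1 * INR M ^ 2 * exp (2 * INR L) * exp (- l / 2)) in Hs by ring.
  replace (exp 1 * INR M ^ 2 * exp (- (n / INR k) / 2) * exp (2 * INR L))
    with (exp 1 * INR M ^ 2 * exp (2 * INR L) * exp (- (n / INR k) / 2)) by ring.
  replace ((-1) ^ 2) with 1 by ring. nra.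
Qed.

Lemma rates_nonneg k n ks : 0 <= n -> List.Forall (fun l => 0 <= l) (rates k n ks).
Proof.
  intros Hn. apply Forall_forall. intros l Hl. unfold rates in Hl.
  apply in_map_iff in Hl as [x [<- _]].
  destruct k; [unfold Rdiv; simpl; rewrite Rinv_0; lra|].
  apply Rdiv_le_0_compat; [apply Rmult_le_pos; [lra| apply pos_INR]| apply lt_0_INR; lia].
Qed.

Lemma pois_expect_C_hat_sq_le k n M ks : 0 <= n -> is_urn k ks ->
  pois_expect (rates k n ks) (fun N => (C_hat k n M N - INR (length ks)) ^ 2)
  <= pois_expect (rates k n ks) (fun N => (0 + lsum (colour_error k n M) N) ^ 2).
Proof.
  intros Hn Hurn.
  assert (Hlen : length (rates k n ks) = length ks) by apply length_map.
  assert (HC : INR (length ks) <= INR k) by (apply le_INR, urn_length_le; auto).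
  assert (HC0 := pos_INR (length ks)).
  apply (pois_expect_le _ _ _ (INR k ^ 2) ((INR (length ks) * colour_error_bound k n M) ^ 2));
    [apply rates_nonneg; auto| intros t Ht; rewrite Hlen in Ht..].
  - apply Rabs_sq_le, Rabs_le.
    assert (0 <= C_seen t) by apply pos_INR.
    assert (C_seen t <= INR (length ks)) by (rewrite <- Ht; apply C_seen_le_length).
    assert (C_seen t <= C_hat k n M t <= INR k); [|lra].
    unfold C_hat. split; [apply Rmin_glb; [apply Rmax_r| lra]| apply Rmin_r].
  - apply Rabs_sq_le. rewrite Rplus_0_l, <- Ht.
    apply lsum_abs_le_length. intros; apply Rabs_colour_error_le.
  - rewrite Rplus_0_l, <- C_tilde_sub_length, Ht. apply C_hat_sq_err_le; [|lra].
    rewrite <- Ht. apply C_seen_le_length.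
Qed.

Lemma C_hat_mse_le k n M ks L rho : (1 <= k)%nat -> 0 < n -> 1 <= n / INR k -> is_urn k ks ->
  1 <= rho -> rho ^ 2 <= (n / INR k) ^ 2 / 2 -> (1 <= L)%nat -> INR M * exp (1 - rho) <= INR L ->
  pois_expect (rates k n ks) (fun N => (C_hat k n M N - INR (length ks)) ^ 2)
  <= (INR k * exp (- (n / INR k - 1) * INR (S M))) ^ 2
     + INR k * (exp (- (n / INR k)) + exp 1 * INR M ^ 2 * exp (- (n / INR k) / 2) * exp (2 * INR L)).
Proof.
  intros Hk Hn Hr Hurn Hrho Hrho2 HL HML.
  set (g := colour_error k n M).
  set (mu := exp (- (n / INR k - 1) * INR (S M))).
  set (nu := exp (- (n / INR k)) + exp 1 * INR M ^ 2 * exp (- (n / INR k) / 2) * exp (2 * INR L)).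
  assert (Hcolours : forall x, In x ks -> (1 <= x)%nat)
    by (destruct Hurn as [HF _]; apply Forall_forall; auto).
  assert (HC : INR (length ks) <= INR k) by (apply le_INR, urn_length_le; auto).
  assert (Hbias : Rabs (lsum (fun l => Epois l g) (rates k n ks)) <= INR (length ks) * mu).
  { unfold rates. rewrite lsum_map. apply lsum_abs_le_length. intros x Hx.
    apply Rabs_Epois_colour_error_le; auto. }
  assert (Hvar : lsum (fun l => Epois l (fun m => g m ^ 2)) (rates k n ks) <= INR (length ks) * nu).
  { unfold rates. rewrite lsum_map. apply lsum_le_length. intros x Hx.
    apply (Epois_colour_error_sq_le k n M x L rho); auto. }
  assert (Hmu : 0 <= mu) by (left; apply exp_pos).
  assert (Hnu : 0 <= nu).
  { unfold nu. pose proof (exp_pos (- (n / INR k))). pose proof (exp_pos 1).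
    pose proof (exp_pos (- (n / INR k) / 2)). pose proof (exp_pos (2 * INR L)).
    pose proof (pow2_ge_0 (INR M)). apply Rplus_le_le_0_compat; [lra|].
    apply Rmult_le_pos; [apply Rmult_le_pos; [apply Rmult_le_pos|]|]; lra. }
  eapply Rle_trans; [apply pois_expect_C_hat_sq_le; auto; lra|].
  eapply Rle_trans.
  { apply (pois_expect_sq_lsum_le g _ (Rabs_colour_error_le k n M)), rates_nonneg; lra. }
  rewrite Rplus_0_l.
  assert (lsum (fun l => Epois l g) (rates k n ks) ^ 2 <= (INR k * mu) ^ 2).
  { rewrite <- !Rsqr_pow2, (Rsqr_abs (lsum _ _)).
    apply Rsqr_incr_1; [| apply Rabs_pos| apply Rmult_le_pos; [apply pos_INR| auto]].
    eapply Rle_trans; [apply Hbias| apply Rmult_le_compat_r; auto]. }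
  assert (INR (length ks) * nu <= INR k * nu) by (apply Rmult_le_compat_r; auto).
  lra.
Qed.

(** * Asymptotic estimates *)

Lemma exp_ge_sq x : 0 <= x -> x ^ 2 / 2 <= exp x.
Proof. intros Hx. apply (pow_div_fact_le_exp x 2) in Hx. simpl in Hx |- *. lra. Qed.

Lemma exp_ge_pow4 x : 0 <= x -> x ^ 4 / 24 <= exp x.
Proof. intros Hx. apply (pow_div_fact_le_exp x 4) in Hx. simpl in Hx |- *. lra. Qed.

Lemma exp_ge_3 x : 2 <= x -> 3 <= exp x.
Proof. intros Hx. pose proof (exp_ineq1_le x). lra. Qed.

Section Asymptotics.
Variables (r : R) (M L : nat).
Hypotheses (Hr : 1000 <= r) (HM : 1 <= INR M)
           (HL : INR L <= INR M * exp (1 - 7/10 * r) + 1).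

Lemma exp_linear_le : 14 * r * exp (1 - 7/10 * r) <= exp (- r / 10).
Proof.
  assert (He := exp_le_3).
  assert (H1 := exp_ge_sq (6/10 * r) ltac:(lra)).
  assert (exp (1 - 7/10 * r) = exp 1 * exp (- (7/10) * r)) by (rewrite <- exp_plus; f_equal; ring).
  assert (exp (- r / 10) = exp (6/10 * r) * exp (- (7/10) * r)) by (rewrite <- exp_plus; f_equal; field).
  assert (0 < exp (- (7/10) * r)) by apply exp_pos.
  assert (0 < exp 1) by apply exp_pos.
  assert (14 * r * exp 1 <= exp (6/10 * r)) by nra.
  nra.
Qed.

(* Either [2 ln M <= r/2 - 3], or [M] is so large that [M e^(-r/10)] dominates polynomially. *)
Lemma log_le_exp_decay : 3 + 2 * ln (INR M) - r / 2 <= INR M * exp (- r / 10) / (7 * r).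
Proof.
  set (x := ln (INR M)). assert (HMx : INR M = exp x) by (unfold x; rewrite exp_ln; lra).
  assert (Hx0 : 0 <= x) by (unfold x; rewrite <- ln_1; apply ln_le; lra).
  assert (Hpos : 0 < INR M * exp (- r / 10) / (7 * r))
    by (apply Rdiv_lt_0_compat; [apply Rmult_lt_0_compat; [lra|apply exp_pos]| lra]).
  destruct (Rle_dec (2 * x) (r / 2 - 3)) as [Hc|Hc]; [lra|]. apply Rnot_le_lt in Hc.
  set (y := 6/10 * x - 6/10).
  assert (Hy : 148 <= y) by (unfold y; lra).
  assert (Hpoly : 7 * (4 * x + 6) * (3 + 2 * x) <= y ^ 4 / 24).
  { assert (E : 7 * (4 * x + 6) * (3 + 2 * x) = 14 * (2 * y + 3) ^ 2 / (36/100)) by (unfold y; field).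
    rewrite E. assert ((2 * y + 3) ^ 2 <= (21/10 * y) ^ 2) by (apply pow_incr; lra).
    assert (y ^ 2 >= 148 ^ 2) by (apply Rle_ge; apply pow_incr; lra).
    assert (y ^ 4 = y ^ 2 * y ^ 2) by ring. nra. }
  assert (Hey : exp y <= INR M * exp (- r / 10)).
  { rewrite HMx, <- exp_plus. apply exp_le_exp. unfold y. lra. }
  assert (Hey4 := exp_ge_pow4 y ltac:(lra)).
  assert (H2 : INR M * exp (- r / 10) / (7 * (4 * x + 6)) <= INR M * exp (- r / 10) / (7 * r)).
  { unfold Rdiv. apply Rmult_le_compat_l; [left; apply Rmult_lt_0_compat; [lra|apply exp_pos]|].
    apply Rinv_le_contravar; lra. }
  assert (H3 : 3 + 2 * x <= INR M * exp (- r / 10) / (7 * (4 * x + 6))).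
  { apply (Rmult_le_reg_r (7 * (4 * x + 6))); [lra|].
    unfold Rdiv. rewrite Rmult_assoc, Rinv_l by lra. nra. }
  lra.
Qed.

Lemma second_moment_excess_le_small_n lnk : INR M * r = 7/2 * lnk ->
  exp 1 * INR M ^ 2 * exp (- r / 2) * exp (2 * INR L) <= exp (lnk / r ^ 2 * exp (- r / 10)).
Proof.
  intros HMr.
  assert (HMx : INR M ^ 2 = exp (2 * ln (INR M))).
  { replace (2 * ln (INR M)) with (ln (INR M) + ln (INR M)) by ring.
    rewrite exp_plus, exp_ln by lra. ring. }
  rewrite HMx, <- !exp_plus. apply exp_le_exp.
  assert (HG : lnk / r ^ 2 * exp (- r / 10)
               = INR M * exp (- r / 10) / (7 * r) + INR M * exp (- r / 10) / (7 * r)).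
  { replace lnk with (INR M * r / (7/2)) by lra. field. lra. }
  rewrite HG.
  assert (Hi := exp_linear_le). assert (Hii := log_le_exp_decay).
  assert (2 * INR M * exp (1 - 7/10 * r) <= INR M * exp (- r / 10) / (7 * r)).
  { apply (Rmult_le_reg_r (7 * r)); [lra|].
    replace (INR M * exp (- r / 10) / (7 * r) * (7 * r)) with (INR M * exp (- r / 10)) by (field; lra).
    nra. }
  lra.
Qed.

Lemma second_moment_excess_le_large_n : INR M <= exp (r / 10) ->
  exp 1 * INR M ^ 2 * exp (- r / 2) * exp (2 * INR L) <= exp (- r / 10) / 3.
Proof.
  intros HMr.
  assert (HM2 : INR M ^ 2 <= exp (r / 5)).
  { replace (exp (r / 5)) with (exp (r / 10) ^ 2) by (rewrite exp_pow; f_equal; simpl; field).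
    apply pow_incr; lra. }
  assert (HL2 : INR L <= 2).
  { assert (INR M * exp (1 - 7/10 * r) <= exp (r / 10) * exp (1 - 7/10 * r))
      by (apply Rmult_le_compat_r; [left; apply exp_pos| auto]).
    rewrite <- exp_plus in H.
    assert (exp (r / 10 + (1 - 7/10 * r)) <= exp 0) by (apply exp_le_exp; lra).
    rewrite exp_0 in H0. lra. }
  apply Rle_trans with (exp 1 * exp (r / 5) * exp (- r / 2) * exp 4).
  { apply Rmult_le_compat; try (left; apply exp_pos).
    - apply Rmult_le_pos; [apply Rmult_le_pos; [left; apply exp_pos| apply pow2_ge_0]|].
      left; apply exp_pos.
    - apply Rmult_le_compat_r; [left; apply exp_pos|].
      apply Rmult_le_compat_l; [left; apply exp_pos| auto].
    - apply exp_le_exp. lra. }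
  rewrite <- !exp_plus.
  assert (exp (1 + r / 5 + - r / 2 + 4) * exp 2 <= exp (- r / 10))
    by (rewrite <- exp_plus; apply exp_le_exp; lra).
  assert (3 <= exp 2) by (apply exp_ge_3; lra).
  assert (0 < exp (1 + r / 5 + - r / 2 + 4)) by apply exp_pos. nra.
Qed.

End Asymptotics.

Lemma bias_sq_plus_miss_le r lnk M : 1000 <= r -> 1 <= lnk -> 1 <= INR M -> INR M * r = 7/2 * lnk ->
  (exp lnk * exp (- (r - 1) * INR (S M))) ^ 2 + exp lnk * exp (- r)
  <= 2 / 3 * (exp lnk * exp (- r / 10)).
Proof.
  intros Hr Hl HM HMr. rewrite S_INR.
  assert (H1 : 3 * lnk <= (r - 1) * (INR M + 1)).
  { assert (INR M <= lnk / 2) by (apply (Rmult_le_reg_r r); [lra| nra]). nra. }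
  assert (Hr2 : r <= 7/2 * lnk) by nra.
  assert (Hbias : (exp lnk * exp (- (r - 1) * (INR M + 1))) ^ 2 <= exp (- (4) * lnk)).
  { rewrite <- exp_plus, exp_pow. apply exp_le_exp. simpl INR. lra. }
  assert (Hbias' : exp (- (4) * lnk) * 3 <= exp lnk * exp (- r / 10)).
  { rewrite <- exp_plus.
    apply Rle_trans with (exp (- (4) * lnk) * exp (465/100 * lnk)).
    - apply Rmult_le_compat_l; [left; apply exp_pos| apply exp_ge_3; lra].
    - rewrite <- exp_plus. apply exp_le_exp. lra. }
  assert (Hmiss : exp (- r) * 3 <= exp (- r / 10)).
  { apply Rle_trans with (exp (- r) * exp (9/10 * r)).
    - apply Rmult_le_compat_l; [left; apply exp_pos| apply exp_ge_3; lra].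
    - rewrite <- exp_plus. apply exp_le_exp. lra. }
  assert (0 < exp lnk) by apply exp_pos.
  nra.
Qed.

Lemma mse_budget_le k n M L : 3 <= INR k -> 1000 <= n / INR k -> 1 <= INR M ->
  INR M * (n / INR k) = 7/2 * ln (INR k) ->
  INR L <= INR M * exp (1 - 7/10 * (n / INR k)) + 1 ->
  (INR k * exp (- (n / INR k - 1) * INR (S M))) ^ 2
  + INR k * (exp (- (n / INR k)) + exp 1 * INR M ^ 2 * exp (- (n / INR k) / 2) * exp (2 * INR L))
  <= INR k * exp (- (1/10) * n / INR k)
     + Rpower (INR k) (- (1 / 2) - (7 / 2) * (INR k / n) * ln (INR k / (exp 1 * n)))
     + Rterm (1/10) 1 10 1 k n.
Proof.
  intros Hk Hr HM HMr HL.
  set (r := n / INR k) in *. set (lnk := ln (INR k)) in *.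
  assert (Hlnk : 1 <= lnk).
  { unfold lnk. rewrite <- (ln_exp 1). apply ln_le; [apply exp_pos|]. pose proof exp_le_3. lra. }
  assert (Hkexp : INR k = exp lnk) by (unfold lnk; rewrite exp_ln; lra).
  assert (Hn : n = r * INR k) by (unfold r; field; lra).
  assert (Hbias := bias_sq_plus_miss_le r lnk M Hr Hlnk HM HMr). rewrite <- Hkexp in Hbias.
  unfold Rterm. fold lnk.
  replace (- (1/10) * n / INR k) with (- r / 10) by (unfold r; field; lra).
  assert (HRp : 0 < Rpower (INR k) (- (1 / 2) - (7 / 2) * (INR k / n) * ln (INR k / (exp 1 * n))))
    by apply exp_pos.
  assert (0 < exp (- r / 10)) by apply exp_pos.
  (* The first regime of [Rterm] absorbs the second-moment excess; beyond it,
     [M <= ln k < e^(r/10)] makes that excess smaller than [e^(-r/10) / 3]. *)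
  destruct (Rle_dec n (10 * INR k * ln lnk)) as [Hsmall|Hlarge].
  - replace (INR k ^ 2 * lnk / n ^ 2) with (lnk / r ^ 2) by (rewrite Hn; field; lra).
    assert (Hexcess := second_moment_excess_le_small_n r M L Hr HM HL lnk HMr).
    assert (INR k * exp 1 * INR M ^ 2 * exp (- r / 2) * exp (2 * INR L)
            <= INR k * exp (lnk / r ^ 2 * exp (- r / 10))) by nra.
    nra.
  - assert (HMr' : INR M <= exp (r / 10)).
    { assert (ln lnk < r / 10).
      { apply Rnot_le_lt in Hlarge. apply (Rmult_lt_reg_l (10 * INR k)); [lra|].
        replace (10 * INR k * (r / 10)) with n by (rewrite Hn; field). lra. }
      rewrite <- (exp_ln lnk) in HMr by lra.
      assert (exp (ln lnk) < exp (r / 10)) by (apply exp_increasing; auto). nra. }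
    assert (Hexcess := second_moment_excess_le_large_n r M L Hr HM HL HMr').
    assert (HR0 : 0 <= (if Rle_dec n (1 * INR k * sqrt lnk)
                then INR k * Rpower (1 * (INR k / n) * ln (INR k ^ 2 * lnk / n ^ 2)) (2 * n / INR k)
                else 0)).
    { destruct (Rle_dec _ _); [|lra]. apply Rmult_le_pos; [lra| left; apply exp_pos]. }
    nra.
Qed.

Theorem theorem2 :
  exists eta c C' A1 A2 : R,
    0 < eta /\ 0 < c /\ 0 < C' /\ 0 < A1 /\ 0 < A2 /\
    forall (k : nat) (n : R) (M : nat) (ks : list nat),
      (3 <= k)%nat ->
      n > eta * INR k ->
      INR M = (7 / 2) * INR k * ln (INR k) / n ->
      is_urn k ks ->
      pois_expect (rates k n ks)
        (fun N => (C_hat k n M N - INR (length ks)) ^ 2)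
      <= INR k * exp (- c * n / INR k)
         + Rpower (INR k) (- (1 / 2) - (7 / 2) * (INR k / n) * ln (INR k / (exp 1 * n)))
         + Rterm c C' A1 A2 k n.
Proof.
  exists 1000, (1/10), 1, 10, 1. do 5 (split; [lra|]).
  intros k n M ks Hk Hn HM Hurn.
  assert (Hkr : 3 <= INR k) by (apply (le_INR 3) in Hk; simpl in Hk; lra).
  assert (Hr : 1000 <= n / INR k) by (apply (Rmult_le_reg_r (INR k)); [lra|]; field_simplify; lra).
  assert (HMr : INR M * (n / INR k) = 7/2 * ln (INR k)) by (rewrite HM; field; lra).
  assert (HM1 : 1 <= INR M).
  { assert (0 < ln (INR k)) by (rewrite <- ln_1; apply ln_increasing; lra).
    destruct M; [simpl in HMr; lra| apply (le_INR 1); lia]. }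
  set (rho := 7/10 * (n / INR k)).
  destruct (nat_ceil_exists (INR M * exp (1 - rho))) as [L [HL [HL1 HL2]]].
  { apply Rmult_le_pos; [lra| left; apply exp_pos]. }
  eapply Rle_trans.
  - apply (C_hat_mse_le k n M ks L rho); unfold rho; auto; try lia; nra.
  - apply mse_budget_le; auto.
Qed.
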